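(* Let $k\in\mathbb N$, $0<p,q\le\infty$, $\alpha\in\mathbb R$, $\beta\in J_p$, $\delta>0$, and $0<\varepsilon\le\min\{2k^2\delta^2,1\}$. Then the function $f(x)=\lambda(x-1+\varepsilon)_+^{k-1}$ with $\lambda=\varepsilon^{-k-\beta-1/p+1}$ satisfies $f\in\mathbb M^k$, $\|w_{\alpha,\beta}f\|_p\sim1$, and \[ \omega_\varphi^k(f,\delta)_{w_{\alpha,\beta},q}\ge c\,\varepsilon^{1/q-1/p}, \] with constants independent of $\varepsilon$ and $\delta$.
   Context: For $x\in[-1,1]$, $\varphi(x)=\sqrt{1-x^2}$, $w_{\alpha,\beta}(x)=(1+x)^\alpha(1-x)^\beta$; $\|\cdot\|_p$ is the $L_p[-1,1]$ (quasi)norm, $\|g\|_{L_q(S)}$ over $S$; $J_p=(-1/p,\infty)$ if $p<\infty$, $J_\infty=[0,\infty)$; $u_+=\max\{u,0\}$ (with $u_+^0$ the indicator of $u>0$... i.e. of $u\ge0$ up to a point). $\Delta_h^k(f,x)=\sum_{i=0}^k\binom ki(-1)^{k-i}f(x-kh/2+ih)$ if $x\pm kh/2\in[-1,1]$, else $0$; $\overrightarrow\Delta_h^k(f,x)=\Delta_h^k(f,x+kh/2)$, $\overleftarrow\Delta_h^k(f,x)=\Delta_h^k(f,x-kh/2)$. For a weight $w$: $\Omega_\varphi^k(f,\delta)_{w,q}=\sup_{0<h\le\delta}\|w(x)\Delta^k_{h\varphi(x)}(f,x)\|_{L_q[-1+2k^2h^2,1-2k^2h^2]}$, $\overrightarrow\Omega_\varphi^k(f,\delta)_{w,q}=\sup_{0<h\le2k^2\delta^2}\|w\overrightarrow\Delta_h^k(f,\cdot)\|_{L_q[-1,-1+2k^2\delta^2]}$,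 $\overleftarrow\Omega_\varphi^k(f,\delta)_{w,q}=\sup_{0<h\le2k^2\delta^2}\|w\overleftarrow\Delta_h^k(f,\cdot)\|_{L_q[1-2k^2\delta^2,1]}$, $\omega_\varphi^k=\Omega_\varphi^k+\overrightarrow\Omega_\varphi^k+\overleftarrow\Omega_\varphi^k$. $\mathbb M^k$: functions on $(-1,1)$ with all $k$th divided differences at distinct points nonnegative. $F\sim G$ means two-sided bounds with positive constants independent of $\varepsilon,\delta$. *)

From HB Require Import structures.
From mathcomp Require Import all_boot all_order all_algebra.
From mathcomp Require Import all_classical all_reals all_analysis.
Set Implicit Arguments. Unset Strict Implicit. Unset Printing Implicit Defensive.
Import Order.TTheory GRing.Theory Num.Theory.
Import numFieldNormedType.Exports.
Local Open Scope classical_set_scope.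
Local Open Scope ring_scope.

Section Defs.
Variable R : realType.

Definition phi (x : R) : R := Num.sqrt (1 - x ^+ 2).

Definition wab (alpha beta : R) (x : R) : R := (1 + x) `^ alpha * (1 - x) `^ beta.

(* u_+^n ; for n = 0 this is the indicator of u > 0 *)
Definition pospow (u : R) (n : nat) : R := if 0 < u then u ^+ n else 0.

Definition invp (p : \bar R) : R :=
  match p with r%:E => r^-1 | _ => 0 end.

Definition in_J (p : \bar R) (beta : R) : Prop :=
  if p is +oo%E then 0 <= beta else - invp p < beta.

Definition normL (q : \bar R) (S : set R) (g : R -> R) : \bar R :=
  Lnorm (@lebesgue_measure R) q (fun x => (\1_S x * g x)%:E).

Definition norm11 (q : \bar R) (g : R -> R) : \bar R :=
  normL q [set x | -1 <= x <= 1] g.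

Definition Delta (k : nat) (h : R) (f : R -> R) (x : R) : R :=
  if [&& -1 <= x - k%:R * h / 2 <= 1 & -1 <= x + k%:R * h / 2 <= 1]
  then \sum_(i < k.+1) ('C(k, i)%:R * (-1) ^+ (k - i) * f (x - k%:R * h / 2 + i%:R * h))
  else 0.

Definition Delta_fwd (k : nat) (h : R) (f : R -> R) (x : R) : R :=
  Delta k h f (x + k%:R * h / 2).
Definition Delta_bwd (k : nat) (h : R) (f : R -> R) (x : R) : R :=
  Delta k h f (x - k%:R * h / 2).

Definition Omega (k : nat) (f : R -> R) (delta : R) (w : R -> R) (q : \bar R) : \bar R :=
  ereal_sup [set y | exists2 h : R, 0 < h <= delta &
    y = normL q [set x | -1 + 2 * k%:R ^+ 2 * h ^+ 2 <= x <= 1 - 2 * k%:R ^+ 2 * h ^+ 2]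
          (fun x => w x * Delta k (h * phi x) f x)].

Definition Omega_fwd (k : nat) (f : R -> R) (delta : R) (w : R -> R) (q : \bar R) : \bar R :=
  ereal_sup [set y | exists2 h : R, 0 < h <= 2 * k%:R ^+ 2 * delta ^+ 2 &
    y = normL q [set x | -1 <= x <= -1 + 2 * k%:R ^+ 2 * delta ^+ 2]
          (fun x => w x * Delta_fwd k h f x)].

Definition Omega_bwd (k : nat) (f : R -> R) (delta : R) (w : R -> R) (q : \bar R) : \bar R :=
  ereal_sup [set y | exists2 h : R, 0 < h <= 2 * k%:R ^+ 2 * delta ^+ 2 &
    y = normL q [set x | 1 - 2 * k%:R ^+ 2 * delta ^+ 2 <= x <= 1]
          (fun x => w x * Delta_bwd k h f x)].

Definition omega (k : nat) (f : R -> R) (delta : R) (w : R -> R) (q : \bar R) : \bar R :=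
  (Omega k f delta w q + Omega_fwd k f delta w q + Omega_bwd k f delta w q)%E.

(* divided difference [x_0,...,x_n; f] at distinct nodes (explicit formula) *)
Definition divdiff (n : nat) (f : R -> R) (x : 'I_n.+1 -> R) : R :=
  \sum_(i < n.+1) f (x i) / \prod_(j < n.+1 | j != i) (x i - x j).

Definition inMk (k : nat) (f : R -> R) : Prop :=
  forall x : 'I_k.+1 -> R, injective x -> (forall i, -1 < x i < 1) ->
    0 <= divdiff f x.

Definition fex (k : nat) (p : \bar R) (beta eps : R) (x : R) : R :=
  eps `^ (- k%:R - beta - invp p + 1) * pospow (x - 1 + eps) k.-1.

End Defs.

From HB Require Import structures.
From mathcomp Require Import all_boot all_order all_algebra.
From mathcomp Require Import all_classical all_reals all_analysis.
From mathcomp Require Import ring lra ess_sup_inf.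
Set Implicit Arguments. Unset Strict Implicit. Unset Printing Implicit Defensive.
Import Order.TTheory GRing.Theory Num.Theory.
Import numFieldNormedType.Exports.
Local Open Scope classical_set_scope.
Local Open Scope ring_scope.

(** The function [f] is a positive multiple of the truncated power
    [(x - a)_+^(k-1)] with [a = 1 - eps].  Its [k]-th divided differences are
    nonnegative by induction on the degree: by the Leibniz rule
    [[x_0..x_n; (x - a) g] = (x_j - a) [x_0..x_n; g] + [x_0..x_n without x_j; g]]
    choosing [x_j > a] or [x_j <= a] according to the sign of [[x_0..x_n; g]]
    makes the first term nonnegative.

    On the support [[1 - eps, 1]] of [f] we have [w ~ (1 - x)^beta] and
    [f <= lambda eps^(k-1)], so [||w f||_p ~ lambda eps^(k - 1 + beta + 1/p) = 1]:
    the lower bound comes from the subinterval [[1 - eps/2, 1 - eps/4]], the upper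
    bound from a dyadic decomposition of [(1 - eps, 1)], which converges because
    [beta p > -1].  For the modulus, take the backward difference with step
    [h = eps/(2k)] at the points of [[1 - eps + h/2, 1 - eps + h]]: every node but
    [x] itself lies left of [1 - eps], so the difference equals [f x ~ eps^(-1/p)],
    and its [L_q] norm over an interval of length [~ eps] is [>~ eps^(1/q - 1/p)]. *)

Section DividedDifferences.
Variable F : fieldType.
Implicit Types (f g : F -> F) (a c x y z : F) (s t : seq F).

Definition ddiff f s : F := \sum_(x <- s) f x / \prod_(y <- s | y != x) (x - y).

Lemma perm_ddiff f s t : perm_eq s t -> ddiff f s = ddiff f t.
Proof.
by move=> st; rewrite /ddiff (perm_big _ st); apply: eq_bigr => x _; rewrite (perm_big _ st).
Qed.

Lemma eq_ddiff f g s : {in s, f =1 g} -> ddiff f s = ddiff g s.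
Proof. by move=> fg; apply: eq_big_seq => x xs; rewrite fg. Qed.

Lemma ddiffZ c f s : ddiff (fun x => c * f x) s = c * ddiff f s.
Proof. by rewrite /ddiff mulr_sumr; apply: eq_bigr => x _; rewrite mulrA. Qed.

Lemma ddiff_cons_mulXsubC a f x s : uniq (x :: s) ->
  ddiff (fun y => (y - a) * f y) (x :: s) = (x - a) * ddiff f (x :: s) + ddiff f s.
Proof.
move=> /= /andP[xs _].
have -> : ddiff (fun y => (y - a) * f y) (x :: s) =
    ddiff (fun y => (x - a) * f y) (x :: s) + ddiff (fun y => (y - x) * f y) (x :: s).
  rewrite /ddiff -big_split; apply: eq_bigr => y _ /=.
  by rewrite -!mulrDl; congr (_ * _ / _); ring.
rewrite ddiffZ; congr (_ + _).
rewrite /ddiff big_cons subrr !mul0r add0r !big_seq; apply: eq_bigr => y ys.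
have xy : x != y by apply: contraNneq xs => ->.
have yx0 : y - x != 0 by rewrite subr_eq0 eq_sym.
by rewrite big_cons xy invfM [_ * f y]mulrC -mulrA mulVKf.
Qed.

Lemma ddiff_mulXsubC a f z s : uniq s -> z \in s ->
  ddiff (fun y => (y - a) * f y) s = (z - a) * ddiff f s + ddiff f (rem z s).
Proof.
move=> us zs; have zs_perm := perm_to_rem zs.
rewrite (perm_ddiff _ zs_perm) (perm_ddiff f zs_perm) ddiff_cons_mulXsubC //.
by rewrite -(perm_uniq zs_perm).
Qed.

Lemma ddiff_rem f y z s : uniq s -> y \in s -> z \in s ->
  (y - z) * ddiff f s = ddiff f (rem z s) - ddiff f (rem y s).
Proof.
move=> us ys zs.
have := ddiff_mulXsubC 0 f us ys; rewrite (ddiff_mulXsubC 0 f us zs) !subr0 => E.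
have -> : ddiff f (rem z s) = y * ddiff f s + ddiff f (rem y s) - z * ddiff f s.
  by rewrite -E; ring.
by ring.
Qed.

Lemma ddiff_pair f x y : x != y -> ddiff f [:: x; y] = (f x - f y) / (x - y).
Proof.
move=> xy; have yx : y != x by rewrite eq_sym.
rewrite /ddiff !big_cons !big_nil /= xy yx !eqxx /= !mulr1 addr0.
have -> : y - x = - (x - y) by ring.
by rewrite invrN mulrN -mulrBl.
Qed.

Lemma ddiff_cst c s : uniq s -> ddiff (fun=> c) s = c *+ (size s == 1)%N.
Proof.
move: {2}(size s) (leqnn (size s)) => n; elim: n s => [|n IH] [|x [|y s]] //.
- by rewrite /ddiff big_nil.
- by rewrite /ddiff big_nil.
- by move=> _ _; rewrite /ddiff big_seq1 big_cons big_nil /= eqxx divr1.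
set t := [:: x, y & s] => tn ut.
have xy : x != y by move: ut => /andP[]; rewrite inE negb_or => /andP[].
have [xt yt] : x \in t /\ y \in t by rewrite !inE !eqxx orbT.
have /eqP : (x - y) * ddiff (fun=> c) t = 0.
  rewrite (ddiff_rem _ ut xt yt) !IH ?rem_uniq ?size_rem //.
  exact: subrr.
by rewrite mulf_eq0 subr_eq0 (negbTE xy) => /eqP ->.
Qed.

End DividedDifferences.

Section TruncatedPowers.
Variable R : realType.
Implicit Types (a u v : R) (s : seq R).

Lemma pospowS u m : pospow u m.+1 = u * pospow u m.
Proof. by rewrite /pospow; case: ifP => _; rewrite ?exprS ?mulr0. Qed.

Lemma pospow_ge0 u m : 0 <= pospow u m.
Proof. by rewrite /pospow; case: ifP => // /ltW u0; rewrite exprn_ge0. Qed.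

Lemma pospow_gt0E u m : 0 < u -> pospow u m = u ^+ m.
Proof. by rewrite /pospow => ->. Qed.

Lemma pospow_le0 u m : u <= 0 -> pospow u m = 0.
Proof. by rewrite /pospow ltNge => ->. Qed.

Lemma pospow0_nondecreasing : {homo (fun u : R => pospow u 0) : u v / u <= v}.
Proof.
move=> u v uv; rewrite /pospow; case: ifP => [u0|_]; last by case: ifP.
by rewrite (lt_le_trans u0 uv).
Qed.

Lemma ddiff_pospow_eq0 m a s : uniq s -> (m.+2 <= size s)%N -> {in s, forall x, a < x} ->
  ddiff (fun x => pospow (x - a) m) s = 0.
Proof.
elim: m s => [|m IH] s us sm sa.
  rewrite (@eq_ddiff _ _ (fun=> 1)) ?ddiff_cst //; first by case: (size s) sm => [|[]].
  by move=> x /sa ax; rewrite pospow_gt0E ?subr_gt0.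
case: s us sm sa => [//|x s] us sm sa.
have us' : uniq s by case/andP: us.
have sa' : {in s, forall y, a < y} by move=> y ys; apply: sa; rewrite inE ys orbT.
rewrite (@eq_ddiff _ _ (fun y => (y - a) * pospow (y - a) m)); last first.
  by move=> y _; rewrite pospowS.
by rewrite ddiff_cons_mulXsubC // !IH ?mulr0 ?addr0 // ltnW.
Qed.

Lemma ddiff_pair_ge0 (f : R -> R) x y : {homo f : u v / u <= v} -> x != y ->
  0 <= ddiff f [:: x; y].
Proof.
move=> fnd xy; rewrite ddiff_pair //; have [xly|ylx] := ltP x y.
  by rewrite -mulrNN -invrN !opprB mulr_ge0 // ?invr_ge0 subr_ge0 ?fnd ?ltW.
by rewrite mulr_ge0 // ?invr_ge0 subr_ge0 ?fnd.
Qed.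

Lemma ddiff_pospow_ge0 m a s : uniq s -> size s = m.+2 ->
  0 <= ddiff (fun x => pospow (x - a) m) s.
Proof.
elim: m s => [|m IH] s us sm.
  case: s us sm => [|x [|y []]] //= /andP[]; rewrite inE => xy _ _.
  by apply: ddiff_pair_ge0 => // u v uv; apply: pospow0_nondecreasing; rewrite lerD2r.
have [/hasP[zlo zlos zloa]|/hasPn sa] := boolP (has (fun x => x <= a) s); last first.
  by rewrite ddiff_pospow_eq0 ?sm // => x /sa; rewrite -ltNge.
have [/hasP[zhi zhis zhia]|/hasPn sa] := boolP (has (fun x => a < x) s); last first.
  rewrite (@eq_ddiff _ _ (fun=> 0)) ?ddiff_cst ?mul0rn //.
  by move=> x /sa; rewrite -leNgt => xa; rewrite pospow_le0 ?subr_le0.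
have IHrem z : z \in s -> 0 <= ddiff (fun x => pospow (x - a) m) (rem z s).
  by move=> zs; apply: IH; rewrite ?rem_uniq ?size_rem ?sm.
rewrite (@eq_ddiff _ _ (fun y => (y - a) * pospow (y - a) m)); last first.
  by move=> y _; rewrite pospowS.
have [D0|D0] := leP 0 (ddiff (fun x => pospow (x - a) m) s).
  by rewrite (ddiff_mulXsubC _ _ us zhis) addr_ge0 ?IHrem // mulr_ge0 // subr_ge0 ltW.
by rewrite (ddiff_mulXsubC _ _ us zlos) addr_ge0 ?IHrem // mulr_le0 ?subr_le0 // ltW.
Qed.

Lemma divdiff_ddiff n (f : R -> R) (x : 'I_n.+1 -> R) : injective x ->
  divdiff f x = ddiff f (map x (index_enum 'I_n.+1)).
Proof.
move=> xinj; rewrite /divdiff /ddiff big_map; apply: eq_bigr => i _.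
by rewrite big_map; congr (_ / _); apply: eq_bigl => j; rewrite (inj_eq xinj).
Qed.

Lemma fex_inMk k (p : \bar R) (beta eps : R) : (1 <= k)%N -> inMk k (fex k p beta eps).
Proof.
move=> k1 x xinj _; rewrite divdiff_ddiff //.
rewrite (@eq_ddiff _ _ (fun y => eps `^ (- k%:R - beta - invp p + 1) *
   pospow (y - (1 - eps)) k.-1)); last first.
  by move=> y _; rewrite /fex; congr (_ * pospow _ _); ring.
rewrite ddiffZ mulr_ge0 ?powR_ge0 // ddiff_pospow_ge0 //.
  by rewrite map_inj_uniq // index_enum_uniq.
by rewrite size_map prednK // -[RHS](card_ord k.+1) cardE /enum_mem size_filter count_predT.
Qed.

End TruncatedPowers.

Section NonnegIntegrals.
Context d (T : measurableType d) (R : realType) (mu : {measure set T -> \bar R}).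
Local Open Scope ereal_scope.

Lemma ge0_le_integral_nomeas (D : set T) (f g : T -> \bar R) :
  (forall x, D x -> 0 <= f x) -> (forall x, D x -> f x <= g x) ->
  \int[mu]_(x in D) f x <= \int[mu]_(x in D) g x.
Proof.
move=> f0 fg; have g0 x : D x -> 0 <= g x by move=> Dx; exact: le_trans (f0 _ Dx) (fg _ Dx).
rewrite (ge0_integralE mu f0) (ge0_integralE mu g0).
apply: ereal_sup_le => _ [h hf <-]; exists h => // x.
exact: le_trans (hf x) (lee_restrict fg x).
Qed.

Lemma integral_cst_indic (A : set T) (c : R) : measurable A -> (0 <= c)%R ->
  \int[mu]_x (c * \1_A x)%:E = c%:E * mu A.
Proof.
move=> mA c0; rewrite (@integralZl_indic _ _ _ mu setT measurableT (fun=> A) c) //.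
  by rewrite integral_indic // setIT.
by move=> /lt_le_trans /(_ c0); rewrite ltxx.
Qed.

Lemma integral_ge_cst_indic (A : set T) (c : R) (F : T -> \bar R) :
  measurable A -> (0 <= c)%R -> (forall x, A x -> c%:E <= F x) -> (forall x, 0 <= F x) ->
  c%:E * mu A <= \int[mu]_x F x.
Proof.
move=> mA c0 cF F0; rewrite -integral_cst_indic //.
apply: ge0_le_integral_nomeas => x _; rewrite /indic; case: (boolP (x \in A)) => xA.
- by rewrite mulr1 lee_fin.
- by rewrite mulr0.
- by rewrite mulr1 cF // -in_setE.
- by rewrite mulr0 F0.
Qed.

End NonnegIntegrals.

Section LebesgueNorms.
Variable R : realType.
Local Notation mu := (@lebesgue_measure R).

Lemma normL_ge_itv (p : \bar R) (S : set R) (g : R -> R) (a b c : R) :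
  (0 < p)%E -> a < b -> `[a, b] `<=` S -> 0 <= c ->
  (forall x, a <= x <= b -> c <= `|g x|) ->
  ((c * (b - a) `^ invp p)%:E <= normL p S g)%E.
Proof.
move=> p0 ab abS c0 cg.
have mab : mu `[a, b]%classic = (b - a)%:E.
  by rewrite lebesgue_measure_itv /= lte_fin ab EFinB.
have gS x : a <= x <= b -> (\1_S x * g x = g x)%R.
  by move=> xab; rewrite /indic mem_set ?mul1r //; apply: abS; rewrite /= in_itv.
case: p p0 => [r||] //; rewrite ?lte_fin => r0; rewrite /normL unlock /=.
  have -> : c * (b - a) `^ r^-1 = (c `^ r * (b - a)) `^ r^-1.
    by rewrite powRM ?powR_ge0 ?subr_ge0 ?ltW // -powRrM mulfV ?gt_eqF // powRr1.
  rewrite -poweR_EFin; apply: gt0_ler_poweR; first by rewrite invr_ge0 ltW.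
  - by rewrite in_itv /= leey andbT lee_fin mulr_ge0 ?powR_ge0 // subr_ge0 ltW.
  - rewrite in_itv /= leey andbT; apply: integral_ge0 => x _.
    by rewrite lee_fin powR_ge0.
  rewrite EFinM -mab; apply: integral_ge_cst_indic; rewrite ?powR_ge0 //.
  move=> x /=; rewrite in_itv /= => xab; rewrite gS // lee_fin.
  by rewrite ge0_ler_powR ?nnegrE ?(ltW r0) ?cg.
have muT0 : (0 < mu [set: R])%E.
  apply: (@lt_le_trans _ _ (mu `[0, 1]%classic)).
    by rewrite lebesgue_measure_itv /= lte_fin ltr01 oppr0 adde0 lte_fin ltr01.
  by rewrite le_measure ?inE //; exact: measurable_itv.
rewrite muT0 powRr0 mulr1; apply: le_ereal_inf_tmp => y /= [N [mN N0 sN]].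
rewrite leNgt; apply/negP => yc.
have abN : `[a, b]%classic `<=` N.
  move=> x /=; rewrite in_itv /= => xab; apply: sN => /=; rewrite gS // => gy.
  by move: (le_lt_trans gy yc); rewrite lte_fin ltNge cg.
have : (mu `[a, b]%classic <= mu N)%E.
  by rewrite le_measure ?inE //; exact: measurable_itv.
by rewrite N0 mab lee_fin subr_le0 leNgt ab.
Qed.

Lemma normLoo_le (S : set R) (g : R -> R) (C : R) :
  0 <= C -> (forall x, S x -> `|g x| <= C) -> (normL +oo%E S g <= C%:E)%E.
Proof.
move=> C0 gC; rewrite /normL unlock /=; case: ifP => _; last by rewrite lee_fin.
apply/ess_supP; apply: nearW => x /=; rewrite /indic.
case: (boolP (x \in S)) => xS; rewrite ?mul1r ?mul0r /= lee_fin ?normr0 //.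
by apply: gC; rewrite -in_setE.
Qed.

Lemma normL_le (r : R) (S : set R) (g : R -> R) (M : R) : 0 < r -> 0 <= M ->
  (\int[mu]_x (`|\1_S x * g x| `^ r)%:E <= M%:E)%E ->
  (normL r%:E S g <= (M `^ r^-1)%:E)%E.
Proof.
move=> r0 M0 gM; rewrite /normL unlock /= -poweR_EFin.
apply: gt0_ler_poweR => //; first by rewrite invr_ge0 ltW.
- rewrite in_itv /= leey andbT; apply: integral_ge0 => x _.
  by rewrite lee_fin powR_ge0.
- by rewrite in_itv /= lee_fin M0 leey.
Qed.

End LebesgueNorms.

Section PowerBounds.
Variable R : realType.
Implicit Types (u y t g : R).

Lemma powR_le_2 u g : 1 <= u <= 2 -> u `^ g <= 2 `^ `|g|.
Proof.
move=> /andP[u1 u2]; have u0 : 0 < u := lt_le_trans ltr01 u1.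
rewrite /powR !gt_eqF // ler_expR; have lnu0 : 0 <= ln u by rewrite ln_ge0.
apply: le_trans (ler_norm _) _; rewrite normrM (ger0_norm lnu0) ler_wpM2l //.
by rewrite ler_ln ?posrE.
Qed.

Lemma powR_ge_2 u g : 1 <= u <= 2 -> 2 `^ (- `|g|) <= u `^ g.
Proof.
move=> /andP[u1 u2]; have u0 : 0 < u := lt_le_trans ltr01 u1.
rewrite /powR !gt_eqF // ler_expR; have lnu0 : 0 <= ln u by rewrite ln_ge0.
rewrite mulNr lerNl; apply: le_trans (ler_norm _) _.
rewrite normrN normrM (ger0_norm lnu0) ler_wpM2l //.
by rewrite ler_ln ?posrE.
Qed.

Lemma powR_exprn y t n : 0 <= y -> (y ^+ n) `^ t = (y `^ t) ^+ n.
Proof.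
move=> y0; rewrite -powR_mulrn // -powRrM mulrC powRrM powR_mulrn //.
exact: powR_ge0.
Qed.

Lemma powR_ratio y t g : 0 < y -> 0 <= t -> t `^ g = y `^ g * (t / y) `^ g.
Proof.
move=> y0 t0; rewrite -powRM ?divr_ge0 ?(ltW y0) //.
by rewrite mulrCA mulfV ?mulr1 // gt_eqF.
Qed.

Lemma powR_doubling_le y t g : 0 < y -> y <= t <= 2 * y -> t `^ g <= y `^ g * 2 `^ `|g|.
Proof.
move=> y0 /andP[yt t2y]; rewrite [t `^ g](@powR_ratio y) ?(le_trans (ltW y0)) //.
rewrite ler_wpM2l ?powR_ge0 // powR_le_2 //.
by rewrite ler_pdivlMr // mul1r ler_pdivrMr // yt t2y.
Qed.

Lemma powR_doubling_ge y t g : 0 < y -> y <= t <= 2 * y -> y `^ g * 2 `^ (- `|g|) <= t `^ g.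
Proof.
move=> y0 /andP[yt t2y]; rewrite [t `^ g](@powR_ratio y) ?(le_trans (ltW y0)) //.
rewrite ler_wpM2l ?powR_ge0 // powR_ge_2 //.
by rewrite ler_pdivlMr // mul1r ler_pdivrMr // yt t2y.
Qed.

Lemma half_powR_lt1 (x : R) : 0 < x -> 2^-1 `^ x < 1.
Proof.
move=> x0; rewrite /powR gt_eqF ?invr_gt0 // expR_lt1 pmulr_rlt0 //.
by rewrite ln_lt0 // invr_gt0 ltr0n invf_lt1 ?ltr1n.
Qed.

End PowerBounds.

Lemma dyadic_index (R : realType) (e t : R) : 0 < t -> t <= e ->
  exists j, e * 2^-1 ^+ j.+1 < t <= e * 2^-1 ^+ j.
Proof.
move=> t0 te; have e0 : 0 < e := lt_le_trans t0 te.
have [N tN] : exists N, e * 2^-1 ^+ N < t.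
  exists (Num.truncn (e / t)).+1.
  rewrite exprVn ltr_pdivrMr ?exprn_gt0 // mulrC -ltr_pdivrMr //.
  apply: lt_le_trans (truncnS_gt _) _.
  by rewrite -natrX ler_nat ltnW // ltn_expl.
pose P n := t <= e * 2^-1 ^+ n.
have P0 : exists i, P i by exists 0%N; rewrite /P expr0 mulr1.
have PN i : P i -> (i <= N)%N.
  rewrite /P leqNgt => Pi; apply/negP => Ni; move: (lt_le_trans tN Pi).
  have hN : (0 : R) < 2^-1 ^+ N by rewrite exprn_gt0 // invr_gt0.
  rewrite (ltr_pM2l e0) -(subnKC (ltnW Ni)) exprD -[ltLHS]mulr1 (ltr_pM2l hN).
  have h1 : 2^-1 ^+ (i - N) <= 1 :> R.
    by rewrite exprn_ile1 // ?invr_ge0 ?ler0n // invf_le1 ?ler1n.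
  by rewrite ltNge h1.
have [j Pj maxj] := ex_maxnP P0 PN.
exists j; apply/andP; split; last exact: Pj.
by rewrite ltNge; apply/negP => /maxj; rewrite ltnn.
Qed.

Section DyadicEstimate.
Variable R : realType.
Local Notation mu := (@lebesgue_measure R).
Variables (e s K : R) (F : R -> R).
Hypotheses (e0 : 0 < e) (s1 : -1 < s) (K0 : 0 <= K) (F0 : forall x, 0 <= F x).
Hypothesis F_out : forall x, x <= 1 - e \/ 1 < x -> F x = 0.
Hypothesis F_in : forall x, 1 - e < x < 1 -> F x <= K * (1 - x) `^ s.

Let layer j : set R := `[1 - e * 2^-1 ^+ j, 1 - e * 2^-1 ^+ j.+1[%classic.
Let height j := K * 2 `^ `|s| * (e * 2^-1 ^+ j.+1) `^ s.

(* The point [x = 1] lies in no layer; it is covered by the extra term [n = 0]. *)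
Let majorant n x : \bar R :=
  if n is j.+1 then (height j * \1_(layer j) x)%:E else (F 1 * \1_[set 1] x)%:E.

Let half_pos : 0 < 2^-1 :> R. Proof. by rewrite invr_gt0. Qed.

Let halfX n : 2^-1 ^+ n = 2 * 2^-1 ^+ n.+1 :> R.
Proof. by rewrite exprS mulrA mulfV ?mul1r. Qed.

Let majorant_ge0 n x : (0 <= majorant n x)%E.
Proof.
by case: n => [|j]; rewrite lee_fin mulr_ge0 ?F0 ?indic_ge0 // !mulr_ge0 ?powR_ge0.
Qed.

Let F_le_majorant x : ((F x)%:E <= \sum_(0 <= n <oo) majorant n x)%E.
Proof.
have series_ge n : ((majorant n x) <= \sum_(0 <= n <oo) majorant n x)%E.
  apply: (le_trans _ (@nneseries_lim_ge _ (majorant^~ x) xpredT 0 n.+1 _)) => //.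
  by rewrite big_nat_recr //= lee_paddl // sume_ge0.
have [x1|x1] := ltP 1 x; first by rewrite F_out ?nneseries_ge0 //; right.
have [xe|xe] := leP x (1 - e); first by rewrite F_out ?nneseries_ge0 //; left.
have [x_eq1|xn1] := eqVneq x 1.
  by apply: (le_trans _ (series_ge 0%N)); rewrite /= x_eq1 /indic mem_set // mulr1.
have xl1 : x < 1 by rewrite lt_neqAle xn1.
have [j /andP[j1 j2]] := @dyadic_index R e (1 - x) ltac:(lra) ltac:(lra).
apply: (le_trans _ (series_ge j.+1)); rewrite /= /indic mem_set; last first.
  by rewrite /layer /= in_itv /=; apply/andP; split; lra.
rewrite mulr1 lee_fin (le_trans (F_in _)) //; first by apply/andP; split; lra.
rewrite /height -mulrA ler_wpM2l // mulrC powR_doubling_le ?mulr_gt0 ?exprn_gt0 //.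
by rewrite -mulrCA -halfX ltW.
Qed.

Let integral_majorant n : (\int[mu]_x majorant n x =
  (if n is j.+1 then K * 2 `^ `|s| * e `^ (s + 1) * (2^-1 `^ (s + 1)) ^+ j.+1 else 0)%:E)%E.
Proof.
case: n => [|j] /=.
  by rewrite integral_cst_indic ?F0 //= lebesgue_measure_set1 mule0.
rewrite integral_cst_indic ?mulr_ge0 ?powR_ge0 //; last exact: measurable_itv.
have ej0 : 0 < e * 2^-1 ^+ j.+1 by rewrite mulr_gt0 // exprn_gt0.
rewrite /= lebesgue_measure_itv /= lte_fin ifT; last by rewrite (halfX j); lra.
rewrite -EFinB -EFinM /height; congr (_%:E).
have -> : 1 - e * 2^-1 ^+ j.+1 - (1 - e * 2^-1 ^+ j) = e * 2^-1 ^+ j.+1.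
  by rewrite (halfX j); ring.
rewrite -!mulrA; congr (_ * (_ * _)).
rewrite -{2}(powRr1 (ltW ej0)) -powRD; last by rewrite (gt_eqF ej0) implybT.
by rewrite powRM ?exprn_ge0 ?ltW // powR_exprn // ltW.
Qed.

Lemma integral_powR_dominated_le :
  (\int[mu]_x (F x)%:E <=
    (K * 2 `^ `|s| * e `^ (s + 1) / (1 - 2^-1 `^ (s + 1)))%:E)%E.
Proof.
set rho : R := 2^-1 `^ (s + 1).
have rho0 : 0 < rho by rewrite powR_gt0.
have rho1 : rho < 1 by rewrite half_powR_lt1 // -ltrBlDr sub0r.
apply: le_trans (ge0_le_integral_nomeas mu _ (fun x _ => F_le_majorant x)) _.
  by move=> x _; rewrite lee_fin.
rewrite integral_nneseries //; last first.
  case=> [|j] /=; apply/measurable_realfun.measurable_EFinP;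
    apply: measurable_realfun.measurable_funM => //;
    apply: measurable_realfun.measurable_indic.
  exact: measurable_itv.
under eq_eseriesr do rewrite integral_majorant.
set C := K * 2 `^ `|s| * e `^ (s + 1).
have C0 : 0 <= C by rewrite !mulr_ge0 ?powR_ge0.
apply: lime_le.
  apply: is_cvg_nneseries => -[|j] _ _ //.
  by rewrite lee_fin mulr_ge0 // exprn_ge0 // powR_ge0.
apply: nearW => N; rewrite sumEFin lee_fin.
apply: (le_trans _ (geometric_le_lim _ C0 rho0 _)); last by rewrite ger0_norm ?ltW.
by apply: ler_sum => -[|j] _; rewrite /geometric /= ?expr0 ?mulr1 ?mulr0.
Qed.

End DyadicEstimate.

Lemma Delta_bwd_last (R : realType) k (h x : R) (g : R -> R) : (0 < k)%N -> 0 < h ->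
  -1 <= x - k%:R * h -> x <= 1 -> (forall y, y <= x - h -> g y = 0) ->
  Delta_bwd k h g x = g x.
Proof.
move=> k0 h0 xkh x1 g0; have kh0 : 0 <= k%:R * h by rewrite mulr_ge0 ?ler0n ?ltW.
rewrite /Delta_bwd /Delta ifT; last by apply/andP; split; apply/andP; split; lra.
rewrite big_ord_recr /= big1 ?add0r => [|i _].
  by rewrite binn subnn expr0 !mulr1 mul1r; congr g; field.
have ik : i%:R + 1 <= k%:R :> R by rewrite natr1 ler_nat ltn_ord.
rewrite g0 ?mulr0 //; nra.
Qed.

Section PointwiseBounds.
Variable R : realType.
Variables (k : nat) (p : \bar R) (al be e : R).

Lemma wab_ge0 (x : R) : 0 <= wab al be x.
Proof. by rewrite /wab mulr_ge0 ?powR_ge0. Qed.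

Lemma fex_ge0 (x : R) : 0 <= fex k p be e x.
Proof. by rewrite /fex mulr_ge0 ?powR_ge0 ?pospow_ge0. Qed.

Lemma fex_eq0 (x : R) : x <= 1 - e -> fex k p be e x = 0.
Proof. by move=> xe; rewrite /fex pospow_le0 ?mulr0 //; lra. Qed.

Lemma fex_coefM : (1 <= k)%N -> 0 < e ->
  e `^ (- k%:R - be - invp p + 1) * e ^+ k.-1 = e `^ (- be - invp p).
Proof.
move=> k1 e0; rewrite -powR_mulrn ?(ltW e0) // -powRD; last by rewrite (gt_eqF e0) implybT.
by congr (_ `^ _); rewrite -{1}(prednK k1) -natr1; ring.
Qed.

Lemma wab_fex_ge (c v x : R) : (1 <= k)%N -> 0 < e -> 0 < c -> 0 < v -> 0 <= x ->
  c * e <= x - 1 + e -> v * e <= 1 - x <= 2 * v * e ->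
  2 `^ (- `|al|) * v `^ be * 2 `^ (- `|be|) * c ^+ k.-1 * e `^ (- invp p)
    <= wab al be x * fex k p be e x.
Proof.
move=> k1 e0 c0 v0 x0 cx /andP[vx xv]; have ve0 : 0 < v * e by rewrite mulr_gt0.
rewrite /wab /fex pospow_gt0E; last by apply: lt_le_trans cx; rewrite mulr_gt0.
have -> : 2 `^ (- `|al|) * v `^ be * 2 `^ (- `|be|) * c ^+ k.-1 * e `^ (- invp p) =
    2 `^ (- `|al|) * ((v * e) `^ be * 2 `^ (- `|be|)) *
    (e `^ (- k%:R - be - invp p + 1) * (c * e) ^+ k.-1).
  have ebe : e `^ be * e `^ (- be - invp p) = e `^ (- invp p).
    rewrite -powRD; last by rewrite (gt_eqF e0) implybT.
    by congr (_ `^ _); ring.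
  rewrite powRM ?(ltW v0) ?(ltW e0) // exprMn -ebe -fex_coefM //; ring.
have ce0 : 0 <= c * e by rewrite mulr_ge0 ?ltW.
apply: ler_pM.
- by rewrite !mulr_ge0 ?powR_ge0.
- by rewrite mulr_ge0 ?powR_ge0 ?exprn_ge0.
- apply: ler_pM; rewrite ?powR_ge0 ?mulr_ge0 ?powR_ge0 ?powR_ge_2 //; first lra.
  by apply: powR_doubling_ge; rewrite // vx /=; lra.
- by rewrite ler_wpM2l ?powR_ge0 // lerXn2r ?nnegrE //; lra.
Qed.

Lemma wab_fex_le (x : R) : (1 <= k)%N -> 0 < e -> e <= 1 -> 1 - e < x <= 1 ->
  wab al be x * fex k p be e x <= 2 `^ `|al| * e `^ (- be - invp p) * (1 - x) `^ be.
Proof.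
move=> k1 e0 e1 /andP[xe x1]; rewrite /wab /fex pospow_gt0E; last by lra.
apply: (@le_trans _ _ (2 `^ `|al| * (1 - x) `^ be *
    (e `^ (- k%:R - be - invp p + 1) * e ^+ k.-1))); last by rewrite fex_coefM // mulrAC.
apply: ler_pM; rewrite ?mulr_ge0 ?powR_ge0 ?exprn_ge0 //; try lra.
- by rewrite ler_wpM2r ?powR_ge0 // powR_le_2 //; apply/andP; split; lra.
- by rewrite ler_wpM2l ?powR_ge0 // lerXn2r ?nnegrE //; lra.
Qed.

End PointwiseBounds.

Section NormBounds.
Variable R : realType.
Variables (k : nat) (al be : R).

Lemma norm11_wab_fex_ge (p : \bar R) : (1 <= k)%N -> (0 < p)%E ->
  exists2 c : R, 0 < c & forall e : R, 0 < e -> e <= 1 ->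
    (c%:E <= norm11 p (fun x => (wab al be x * fex k p be e x)%R))%E.
Proof.
move=> k1 p0; set c := 2 `^ (- `|al|) * 4^-1 `^ be * 2 `^ (- `|be|) * 2^-1 ^+ k.-1.
have c0 : 0 < c by rewrite !mulr_gt0 ?powR_gt0 ?exprn_gt0 ?invr_gt0.
exists (c * 4^-1 `^ invp p) => [|e e0 e1]; first by rewrite mulr_gt0 ?powR_gt0 ?invr_gt0.
have -> : c * 4^-1 `^ invp p = c * e `^ (- invp p) * (1 - e / 4 - (1 - e / 2)) `^ invp p.
  have -> : 1 - e / 4 - (1 - e / 2) = e * 4^-1 by field.
  have eNe : e `^ (- invp p) * e `^ invp p = 1.
    by rewrite -powRD ?addNr ?powRr0 // (gt_eqF e0) implybT.
  by rewrite powRM ?invr_ge0 ?(ltW e0) // mulrA -(mulrA c) eNe mulr1.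
apply: normL_ge_itv => //; first lra.
- by move=> x /=; rewrite in_itv /= => /andP[? ?]; apply/andP; split; lra.
- by rewrite mulr_ge0 ?powR_ge0 ?ltW.
move=> x /andP[xl xu]; rewrite ger0_norm; last by rewrite mulr_ge0 ?wab_ge0 ?fex_ge0.
by apply: wab_fex_ge => //; rewrite ?invr_gt0 //; try (apply/andP; split); lra.
Qed.

Lemma norm11_wab_fex_le_oo (e : R) : (1 <= k)%N -> 0 <= be -> 0 < e -> e <= 1 ->
  (norm11 +oo%E (fun x => (wab al be x * fex k +oo%E be e x)%R) <= (2 `^ `|al|)%:E)%E.
Proof.
move=> k1 be0 e0 e1; apply: normLoo_le; first exact: powR_ge0.
move=> x /andP[xl xu]; rewrite ger0_norm; last by rewrite mulr_ge0 ?wab_ge0 ?fex_ge0.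
have [xe|xe] := leP x (1 - e); first by rewrite fex_eq0 ?mulr0 ?powR_ge0.
apply: le_trans (wab_fex_le +oo%E al be k1 e0 e1 _) _; first by apply/andP; split.
have ebe0 : 0 < e `^ be by rewrite powR_gt0.
rewrite /= subr0 -mulrA -[leRHS]mulr1 ler_wpM2l ?powR_ge0 // powRN.
rewrite -[leRHS](mulVf (lt0r_neq0 ebe0)) ler_wpM2l ?invr_ge0 ?powR_ge0 //.
by rewrite ge0_ler_powR ?nnegrE //; lra.
Qed.

Lemma norm11_wab_fex_le_fin (r : R) : (1 <= k)%N -> 0 < r -> - r^-1 < be ->
  exists2 c : R, 0 < c & forall e : R, 0 < e -> e <= 1 ->
    (norm11 r%:E (fun x => (wab al be x * fex k r%:E be e x)%R) <= c%:E)%E.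
Proof.
move=> k1 r0 hb; have rr : r * r^-1 = 1 by rewrite mulfV ?gt_eqF.
have s1 : -1 < be * r by nra.
have s10 : 0 < be * r + 1 by rewrite -ltrBlDr sub0r.
set M := (2 `^ `|al|) `^ r * 2 `^ `|be * r| / (1 - 2^-1 `^ (be * r + 1)).
have M0 : 0 < M by rewrite divr_gt0 ?mulr_gt0 ?powR_gt0 // subr_gt0 half_powR_lt1.
exists (M `^ r^-1) => [|e e0 e1]; first exact: powR_gt0.
apply: normL_le => //; first exact: ltW.
set K := (2 `^ `|al| * e `^ (- be - r^-1)) `^ r.
have -> : M = K * 2 `^ `|be * r| * e `^ (be * r + 1) / (1 - 2^-1 `^ (be * r + 1)).
  have eK : (e `^ (- be - r^-1)) `^ r * e `^ (be * r + 1) = 1.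
    rewrite -powRrM -powRD; last by rewrite (gt_eqF e0) implybT.
    have -> : (- be - r^-1) * r + (be * r + 1) = 0.
      by rewrite mulrBl mulVf ?gt_eqF //; ring.
    exact: powRr0.
  rewrite /K powRM ?powR_ge0 //.
  transitivity (M * ((e `^ (- be - r^-1)) `^ r * e `^ (be * r + 1))).
    by rewrite eK mulr1.
  by rewrite /M; ring.
apply: integral_powR_dominated_le => //; first exact: powR_ge0.
- move=> x [xe|x1].
    by rewrite fex_eq0 // !mulr0 normr0 powR0 // gt_eqF.
  by rewrite /indic memNset ?mul0r ?normr0 ?powR0 ?gt_eqF //= => /andP[_]; lra.
move=> x /andP[xe x1]; rewrite /indic mem_set /=; last by apply/andP; split; lra.
have wf0 : 0 <= wab al be x * fex k r%:E be e x by rewrite mulr_ge0 ?wab_ge0 ?fex_ge0.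
rewrite mul1r ger0_norm // /K powRrM -powRM ?mulr_ge0 ?powR_ge0 //.
apply: ge0_ler_powR; rewrite ?nnegrE ?mulr_ge0 ?powR_ge0 ?pospow_ge0 ?(ltW r0) //.
by apply: (wab_fex_le r%:E al be k1 e0 e1); apply/andP; split; lra.
Qed.

Lemma norm11_wab_fex_le (p : \bar R) : (1 <= k)%N -> (0 < p)%E -> in_J p be ->
  exists2 c : R, 0 < c & forall e : R, 0 < e -> e <= 1 ->
    (norm11 p (fun x => (wab al be x * fex k p be e x)%R) <= c%:E)%E.
Proof.
case: p => [r||] // k1; rewrite /in_J ?lte_fin => p0 hJ; first exact: norm11_wab_fex_le_fin.
by exists (2 `^ `|al|) => [|e e0 e1]; [exact: powR_gt0 | exact: norm11_wab_fex_le_oo].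
Qed.

End NormBounds.

Section ModulusBound.
Variable R : realType.
Implicit Types (f w : R -> R) (q : \bar R).

Lemma Omega_ge0 k f d w q : 0 < d -> (0 <= Omega k f d w q)%E.
Proof.
move=> d0; apply: (le_trans _ (ereal_sup_ubound _)); last by exists d; rewrite ?d0 ?lexx.
exact: Lnorm_ge0.
Qed.

Lemma Omega_fwd_ge0 k f d w q : (0 < k)%N -> 0 < d -> (0 <= Omega_fwd k f d w q)%E.
Proof.
move=> k0 d0; apply: (le_trans _ (ereal_sup_ubound _)); last first.
  by exists (2 * k%:R ^+ 2 * d ^+ 2); rewrite ?lexx ?andbT ?mulr_gt0 ?exprn_gt0 ?ltr0n.
exact: Lnorm_ge0.
Qed.

Lemma omega_fex_ge k (p q : \bar R) (al be : R) : (1 <= k)%N -> (0 < q)%E ->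
  exists2 c : R, 0 < c & forall d e : R, 0 < d -> 0 < e ->
    e <= 2 * k%:R ^+ 2 * d ^+ 2 -> e <= 1 ->
    ((c * e `^ (invp q - invp p))%:E <= omega k (fex k p be e) d (wab al be) q)%E.
Proof.
move=> k1 q0; have kR : 1 <= k%:R :> R by rewrite ler1n.
set c := 2 `^ (- `|al|) * 2^-1 `^ be * 2 `^ (- `|be|) * (4 * k%:R)^-1 ^+ k.-1.
have c0 : 0 < c by rewrite !mulr_gt0 ?powR_gt0 ?exprn_gt0 ?invr_gt0 ?mulr_gt0 ?ltr0n.
exists (c * (4 * k%:R)^-1 `^ invp q) => [|d e d0 e0 eD e1].
  by rewrite mulr_gt0 // powR_gt0 // invr_gt0 mulr_gt0 ?ltr0n.
rewrite /omega; apply: lee_paddl; first by rewrite adde_ge0 ?Omega_ge0 ?Omega_fwd_ge0.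
set h := e * (2 * k%:R)^-1.
have kh : k%:R * h = e / 2 by rewrite /h; field; rewrite pnatr_eq0 -lt0n.
have h0 : 0 < h by rewrite mulr_gt0 // invr_gt0 mulr_gt0 ?ltr0n.
have he : h <= e / 2 by nra.
have h2 : h / 2 = (4 * k%:R)^-1 * e by rewrite /h; field; rewrite pnatr_eq0 -lt0n.
apply: (le_trans _ (ereal_sup_ubound _)); last by exists h; rewrite ?h0 //=; lra.
have -> : c * (4 * k%:R)^-1 `^ invp q * e `^ (invp q - invp p) =
    c * e `^ (- invp p) * (1 - e + h - (1 - e + h / 2)) `^ invp q.
  have -> : 1 - e + h - (1 - e + h / 2) = (4 * k%:R)^-1 * e.
    by rewrite /h; field; rewrite pnatr_eq0 -lt0n.
  rewrite powRM ?invr_ge0 ?(ltW e0) ?mulr_ge0 ?ler0n // [invp q - _]addrC powRD; last first.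
    by rewrite (gt_eqF e0) implybT.
  by ring.
apply: normL_ge_itv => //; first lra.
- by move=> x /=; rewrite in_itv /= => /andP[? ?]; apply/andP; split; lra.
- by rewrite mulr_ge0 ?powR_ge0 ?ltW.
move=> x /andP[xl xu].
rewrite Delta_bwd_last //; first last.
- by move=> y yx; rewrite fex_eq0 //; lra.
- lra.
- by rewrite kh; lra.
rewrite ger0_norm; last by rewrite mulr_ge0 ?wab_ge0 ?fex_ge0.
apply: wab_fex_ge => //; rewrite ?invr_gt0 ?mulr_gt0 ?ltr0n //.
all: by try (apply/andP; split); lra.
Qed.

End ModulusBound.

Theorem lemma6p4 (R : realType) (k : nat) (p q : \bar R) (alpha beta : R) :
  (1 <= k)%N -> (0 < p)%E -> (0 < q)%E -> in_J p beta ->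
  exists c1 c2 c : R, [/\ 0 < c1, 0 < c2, 0 < c &
    forall delta eps : R, 0 < delta -> 0 < eps ->
      eps <= Num.min (2 * k%:R ^+ 2 * delta ^+ 2) 1 ->
      [/\ inMk k (fex k p beta eps),
          (c1%:E <= norm11 p (fun x => (wab alpha beta x * fex k p beta eps x)%R))%E,
          (norm11 p (fun x => (wab alpha beta x * fex k p beta eps x)%R) <= c2%:E)%E &
          ((c * eps `^ (invp q - invp p))%:E
             <= omega k (fex k p beta eps) delta (wab alpha beta) q)%E]].
Proof.
move=> k1 p0 q0 hJ.
have [c1 c10 norm_ge] := norm11_wab_fex_ge alpha beta k1 p0.
have [c2 c20 norm_le] := norm11_wab_fex_le alpha k1 p0 hJ.
have [c c0 omega_ge] := omega_fex_ge p alpha beta k1 q0.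
exists c1, c2, c; split => // delta eps d0 e0; rewrite le_min => /andP[eD e1].
by split; [exact: fex_inMk | exact: norm_ge | exact: norm_le | exact: omega_ge].
Qed.
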